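(* Let $t \geq 1$ and $k \geq 1$ be integers, and let $\mathcal{F}$ be a finite family of finite sets with $\alpha(\mathcal{F}) \geq t$. Let $\mathcal{A}_1, \dots, \mathcal{A}_k$ be cross-$t$-intersecting sub-families of $\mathcal{F}$ such that $\sum_{i=1}^k |\mathcal{A}_i|$ is maximum among all $k$-tuples of cross-$t$-intersecting sub-families of $\mathcal{F}$. Then: (i) $\sum_{i=1}^k |\mathcal{A}_i| = k\, l(\mathcal{F},t)$ if $k \geq \kappa(\mathcal{F},t)$; (ii) $\sum_{i=1}^k |\mathcal{A}_i| > k\, l(\mathcal{F},t)$ if $k < \kappa(\mathcal{F},t)$.
   Context: All sets and families are finite. A family $\mathcal{A}$ is $t$-intersecting if $|A \cap B| \geq t$ for all $A, B \in \mathcal{A}$ with $A \neq B$. Families $\mathcal{A}_1, \dots, \mathcal{A}_k$ (not necessarily distinct or non-empty) are cross-$t$-intersecting if for all $i \neq j$, $|A \cap B| \geq t$ for every $A \in \mathcal{A}_i$ and $B \in \mathcal{A}_j$. For non-empty $\mathcal{F}$: $\alpha(\mathcal{F}) = \max\{|F| : F \in \mathcal{F}\}$; $l(\mathcal{F},t)$ is the size of a largest $t$-intersecting sub-family of $\mathcal{F}$. For a family $\mathcal{A}$, $\mathcal{A}^{t,+} = \{A \in \mathcal{A} : |A \cap B| \geq t \text{ for all } B \in \mathcal{A}\setminus\{A\}\}$ and $\mathcal{A}^{t,-} = \mathcal{A} \setminus \mathcal{A}^{t,+}$. For $\mathcal{A} \subseteq \mathcal{F}$, $\beta(\mathcal{F},t,\mathcal{A})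 = \frac{l(\mathcal{F},t) - |\mathcal{A}^{t,+}|}{|\mathcal{A}^{t,-}|}$ if $\mathcal{A}^{t,-} \neq \emptyset$, and $\frac{l(\mathcal{F},t)}{|\mathcal{F}|}$ otherwise; $\beta(\mathcal{F},t) = \min_{\mathcal{A} \subseteq \mathcal{F}} \beta(\mathcal{F},t,\mathcal{A})$ and $\kappa(\mathcal{F},t) = 1/\beta(\mathcal{F},t)$. *)

From mathcomp Require Import all_boot all_order all_algebra.
Set Implicit Arguments. Unset Strict Implicit. Unset Printing Implicit Defensive.
Import Order.TTheory GRing.Theory Num.Theory.

Section Defs.
Variable T : finType.

Definition t_intersecting (t : nat) (A : {set {set T}}) : bool :=
  [forall X in A, forall Y in A, (X != Y) ==> (t <= #|X :&: Y|)].

Definition cross_t_intersecting (t k : nat) (As : 'I_k -> {set {set T}}) : Prop :=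
  forall i j : 'I_k, i != j ->
    forall X Y, X \in As i -> Y \in As j -> t <= #|X :&: Y|.

(* alpha(F) = max size of a member (only used for nonempty F) *)
Definition alpha (F : {set {set T}}) : nat := \max_(X in F) #|X|.

Definition ell (F : {set {set T}}) (t : nat) : nat :=
  \max_(G : {set {set T}} | (G \subset F) && t_intersecting t G) #|G|.

Definition plus_part (t : nat) (A : {set {set T}}) : {set {set T}} :=
  [set X in A | [forall Y in A :\ X, t <= #|X :&: Y|]].

Definition minus_part (t : nat) (A : {set {set T}}) : {set {set T}} :=
  A :\: plus_part t A.

Local Open Scope ring_scope.

Definition beta_A (F : {set {set T}}) (t : nat) (A : {set {set T}}) : rat :=
  if minus_part t A != set0 then
    ((ell F t)%:R - #|plus_part t A|%:R) / #|minus_part t A|%:R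
  else (ell F t)%:R / #|F|%:R.

(* beta(F,t) = min over A subset F; the empty subfamily is a member of the
   range, so using its value as the seed of the fold gives the true minimum. *)
Definition beta (F : {set {set T}}) (t : nat) : rat :=
  \big[Order.min/beta_A F t set0]_(A : {set {set T}} | A \subset F) beta_A F t A.

(* kappa(F,t) = 1/beta(F,t), as an extended positive rational:
   None represents +infinity (the case beta(F,t) = 0). *)
Definition kappa (F : {set {set T}}) (t : nat) : option rat :=
  if beta F t == 0 then None else Some (beta F t)^-1.

Definition kappa_le_nat (F : {set {set T}}) (t k : nat) : Prop :=
  match kappa F t with
  | None => False
  | Some r => r <= k%:R
  end.

End Defs.

(* For A ⊆ F let A⁺ be the members of A meeting every other member of A in at
   least t points, and A⁻ the others.  If A⁻ is nonempty, a member of A⁺ also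
   meets itself in at least t points (it meets a member of A⁻ that well), so
   (A, A⁺, …, A⁺) is cross-t-intersecting, of total size k|A⁺| + |A⁻|; if A⁻ is
   empty, (F, ∅, …, ∅) has total size |F|.  Conversely, if A is the union of a
   cross-t-intersecting tuple, a member X of A⁻ misses some Y in A, say in the
   j-th family, so X lies in no family but the j-th: the total is at most
   k|A⁺| + |A⁻|, and at most k·l(F,t) when A⁻ is empty.  Finally k copies of a
   largest t-intersecting family G give k·l(F,t): if |G| ≥ 2 its members have
   at least t elements, and otherwise {X} with |X| = α(F) ≥ t does as well.
   Since k ≥ κ(F,t) says exactly that each size k|A⁺| + |A⁻| (resp. |F|) is at
   most k·l(F,t), both parts follow. *)
From mathcomp Require Import all_boot all_order all_algebra.
Import Order.TTheory GRing.Theory Num.Theory.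
Set Implicit Arguments. Unset Strict Implicit.

Section Families.
Variable T : finType.
Implicit Types (A F G : {set {set T}}) (X Y : {set T}).

Lemma alpha_witness m F :
  0 < m -> m <= alpha F -> exists2 X, X \in F & m <= #|X|.
Proof.
move=> m_gt0 le_m_alpha; apply/exists_inP; apply: contraLR le_m_alpha.
move=> /exists_inPn small; rewrite -ltnNge -(prednK m_gt0) ltnS.
by apply/bigmax_leqP => X XF; rewrite -ltnS prednK // ltnNge small.
Qed.

Lemma leq_ell t F G : G \subset F -> t_intersecting t G -> #|G| <= ell F t.
Proof.
move=> GF Gint; rewrite /ell.
by apply: (@leq_bigmax_cond _ (fun G => (G \subset F) && _)); rewrite GF.
Qed.

Lemma ell_attained t F :
  exists2 G : {set {set T}}, (G \subset F) && t_intersecting t G & #|G| = ell F t.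
Proof.
have : 0 < #|[pred G : {set {set T}} | (G \subset F) && t_intersecting t G]|.
  apply/card_gt0P; exists set0; rewrite inE sub0set /=.
  by apply/forall_inP => X; rewrite inE.
by case/(eq_bigmax_cond (fun G : {set {set T}} => #|G|)) => G; exists G.
Qed.

Lemma t_intersecting_card_ge t G X :
  t_intersecting t G -> 2 <= #|G| -> X \in G -> t <= #|X|.
Proof.
move=> /forall_inP Gint G_ge2 XG.
have : 0 < #|G :\ X| by move: G_ge2; rewrite (cardsD1 X G) XG add1n ltnS.
case/card_gt0P => Y; rewrite !inE => /andP[YX YG].
have /forall_inP/(_ Y YG) := Gint X XG; rewrite eq_sym YX => /leq_trans; apply.
exact/subset_leq_card/subsetIl.
Qed.

Lemma cross_t_intersecting_const t k G :
  t_intersecting t G -> {in G, forall X, t <= #|X|} ->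
  cross_t_intersecting t (fun _ : 'I_k => G).
Proof.
move=> /forall_inP Gint G_large i j _ X Y XG YG.
have [<-|XY] := eqVneq X Y; first by rewrite setIid; exact: G_large.
by have /forall_inP/(_ Y YG) := Gint X XG; rewrite XY.
Qed.

Lemma ell_cross_const t k F X0 :
  X0 \in F -> t <= #|X0| ->
  exists G, [/\ G \subset F, cross_t_intersecting t (fun _ : 'I_k => G)
              & ell F t <= #|G|].
Proof.
move=> X0F X0_large; have [G /andP[GF Gint] <-] := ell_attained t F.
have [G_ge2|G_le1] := leqP 2 #|G|.
  exists G; split=> //; apply: cross_t_intersecting_const => // X.
  exact: t_intersecting_card_ge.
exists [set X0]; split; first by rewrite sub1set.
- apply: cross_t_intersecting_const => [|X /set1P -> //].
  by apply/forall_inP => X /set1P ->; apply/forall_inP => Y /set1P ->; rewrite eqxx.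
- by rewrite cards1 -ltnS.
Qed.

Lemma plus_part_sub t A : plus_part t A \subset A.
Proof. by apply/subsetP => X; rewrite inE => /andP[]. Qed.

Lemma plus_part_t_intersecting t A : t_intersecting t (plus_part t A).
Proof.
apply/forall_inP => X; rewrite inE => /andP[_ /forall_inP HX].
apply/forall_inP => Y; rewrite inE => /andP[YA _]; apply/implyP => XY.
by apply: HX; rewrite !inE eq_sym XY.
Qed.

Lemma card_plus_minus t A : #|A| = #|plus_part t A| + #|minus_part t A|.
Proof. by rewrite -(cardsID (plus_part t A) A) (setIidPr (plus_part_sub _ _)). Qed.

Lemma minus_partP t A X :
  X \in minus_part t A -> X \in A /\ exists2 Y, Y \in A & #|X :&: Y| < t.
Proof.
rewrite inE => /andP[XnP XA]; split=> //.
have /forall_inPn[Y] : ~~ [forall Y in A :\ X, t <= #|X :&: Y|].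
  by apply: contra XnP => h; rewrite inE XA.
by rewrite !inE -ltnNge => /andP[_ YA] lt; exists Y.
Qed.

Lemma plus_part_meet t A X Y :
  minus_part t A != set0 -> X \in plus_part t A -> Y \in A -> t <= #|X :&: Y|.
Proof.
move=> /set0Pn[Z ZM] XP YA; have := XP; rewrite inE => /andP[XA /forall_inP HX].
have meet W : W \in A -> W != X -> t <= #|X :&: W|.
  by move=> WA WX; apply: HX; rewrite !inE WX.
have [->|//] := eqVneq Y X; last exact: meet.
have ZX : Z != X by apply: contraTneq ZM => ->; rewrite inE XP.
have [ZA _] := minus_partP ZM.
rewrite setIid; apply: leq_trans (meet Z ZA ZX) _; exact/subset_leq_card/subsetIl.
Qed.

Lemma sum_cross_le_plus_minus t k (As : 'I_k -> {set {set T}}) :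
  cross_t_intersecting t As ->
  \sum_(i < k) #|As i|
    <= k * #|plus_part t (\bigcup_(i < k) As i)|
       + #|minus_part t (\bigcup_(i < k) As i)|.
Proof.
move=> cross; set A := \bigcup_(i < k) As i.
have cardE i : #|As i| = \sum_(X in A) (X \in As i : nat).
  rewrite -sum1_card big_mkcond [RHS]big_mkcond; apply: eq_bigr => X _.
  have [XAi|] := boolP (X \in As i); last by case: (X \in A).
  by rewrite ifT //; apply/bigcupP; exists i.
rewrite (eq_bigr _ (fun i _ => cardE i)) exchange_big (big_setID (plus_part t A)) /=.
rewrite (setIidPr (plus_part_sub _ _)) -/(minus_part t A); apply: leq_add.
  rewrite mulnC -sum_nat_const; apply: leq_sum => X _.
  by rewrite -[leqRHS]card_ord -sum1_card; apply: leq_sum => i _; apply: leq_b1.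
rewrite -sum1_card; apply: leq_sum => X XM.
have [_ [Y /bigcupP[j _ YAj] XY]] := minus_partP XM.
rewrite (bigD1 j) //= big1 ?addn0 ?leq_b1 // => i ij.
by apply/eqP; rewrite eqb0; apply: contraTN XY => XAi; rewrite -leqNgt (cross i j).
Qed.

Section ExtremalTuple.
Variables (t k : nat) (F A : {set {set T}}).

Definition extremal_tuple (i : 'I_k) : {set {set T}} :=
  if minus_part t A != set0 then (if val i == 0 then A else plus_part t A)
  else (if val i == 0 then F else set0).

Definition extremal_size : nat :=
  if minus_part t A != set0 then k * #|plus_part t A| + #|minus_part t A|
  else #|F|.

Lemma extremal_tuple_sub : A \subset F -> forall i, extremal_tuple i \subset F.
Proof.
move=> AF i; rewrite /extremal_tuple; case: ifP => _; case: ifP => // _.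
  exact: subset_trans (plus_part_sub _ _) AF.
exact: sub0set.
Qed.

Lemma extremal_tuple_cross : cross_t_intersecting t extremal_tuple.
Proof.
move=> i j ij X Y; rewrite /extremal_tuple.
have [i0|_] := eqVneq (val i) 0; have [j0|_] := eqVneq (val j) 0.
- by move: ij; rewrite -(inj_eq val_inj) i0 j0.
- case: ifP => [M XA YP|_ _]; last by rewrite inE.
  by rewrite setIC; apply: plus_part_meet YP XA.
- case: ifP => [M XP YA|_]; last by rewrite inE.
  exact: plus_part_meet XP YA.
- case: ifP => [M XP /(subsetP (plus_part_sub _ _))|_]; last by rewrite inE.
  exact: plus_part_meet.
Qed.

End ExtremalTuple.

Lemma sum_extremal_tuple t k F A :
  0 < k -> \sum_(i < k) #|extremal_tuple t F A i| = extremal_size t k F A.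
Proof.
case: k => // n _; rewrite big_ord_recl /extremal_tuple /extremal_size /=.
rewrite sum_nat_const card_ord; case: ifP => _; last by rewrite cards0 muln0 addn0.
by rewrite (card_plus_minus t A) mulSn addnAC.
Qed.

Lemma sum_cross_le t k F (As : 'I_k -> {set {set T}}) :
  (forall i, As i \subset F) -> cross_t_intersecting t As ->
  \sum_(i < k) #|As i|
    <= maxn (k * ell F t) (extremal_size t k F (\bigcup_(i < k) As i)).
Proof.
move=> sub cross; apply: leq_trans (sum_cross_le_plus_minus cross) _.
set A := \bigcup_(i < k) As i; rewrite /extremal_size leq_max.
case: ifP => [_|/negbFE/eqP->]; first by rewrite leqnn orbT.
rewrite cards0 addn0 leq_mul2l leq_ell ?orbT //; last exact: plus_part_t_intersecting.
by apply: subset_trans (plus_part_sub _ _) _; apply/bigcupsP => i _.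
Qed.

Local Open Scope ring_scope.

Lemma beta_A_ge0 t F A : A \subset F -> 0 <= beta_A F t A.
Proof.
move=> AF; rewrite /beta_A; case: ifP => _; rewrite divr_ge0 // subr_ge0 ler_nat.
apply: leq_ell; last exact: plus_part_t_intersecting.
exact: subset_trans (plus_part_sub _ _) AF.
Qed.

Lemma beta_ge0 t F : 0 <= beta F t.
Proof. by apply: le_bigmin => [|A]; apply: beta_A_ge0; rewrite ?sub0set. Qed.

Lemma mul_beta_A_ge1 t k F A : (0 < #|F|)%N ->
  (1 <= k%:R * beta_A F t A) = (extremal_size t k F A <= k * ell F t)%N.
Proof.
move=> F_gt0; rewrite /beta_A /extremal_size; case: ifP => M; rewrite mulrA.
  rewrite ler_pdivlMr ?ltr0n ?card_gt0 // mul1r mulrBr lerBrDr.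
  by rewrite -!natrM -natrD ler_nat addnC.
by rewrite ler_pdivlMr ?ltr0n // mul1r -natrM ler_nat.
Qed.

Lemma mul_beta_ge1 t k F : (0 < k)%N -> (0 < #|F|)%N ->
  (1 <= k%:R * beta F t) =
  [forall A : {set {set T}},
     (A \subset F) ==> (extremal_size t k F A <= k * ell F t)%N].
Proof.
move=> k_gt0 F_gt0.
have invE (x : rat) : (1 <= k%:R * x) = (k%:R^-1 <= x).
  by rewrite -ler_pdivrMl ?ltr0n ?mulr1.
rewrite invE; apply/bigmin_geP/forallP => [[_ le_beta] A | le_size].
  by apply/implyP => AF; rewrite -mul_beta_A_ge1 // invE le_beta.
split=> [|A AF]; rewrite -invE mul_beta_A_ge1 //; apply: (implyP (le_size _)) => //.
exact: sub0set.
Qed.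

Lemma kappa_le_natP t k F :
  reflect (kappa_le_nat F t k) (1 <= k%:R * beta F t).
Proof.
rewrite /kappa_le_nat /kappa; have [->|b_neq0] := eqVneq (beta F t) 0.
  by rewrite mulr0 ler10; constructor.
have b_gt0 : 0 < beta F t by rewrite lt_def b_neq0 beta_ge0.
by rewrite -div1r ler_pdivrMr // mulrC; apply: idP.
Qed.

End Families.

Theorem theorem1p2 (T : finType) (t k : nat) (F : {set {set T}})
  (As : 'I_k -> {set {set T}}) :
  1 <= t -> 1 <= k -> t <= alpha F ->
  (forall i, As i \subset F) ->
  cross_t_intersecting t As ->
  (forall Bs : 'I_k -> {set {set T}},
      (forall i, Bs i \subset F) -> cross_t_intersecting t Bs ->
      \sum_(i < k) #|Bs i| <= \sum_(i < k) #|As i|) ->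
  (kappa_le_nat F t k -> \sum_(i < k) #|As i| = k * ell F t) /\
  (~ kappa_le_nat F t k -> k * ell F t < \sum_(i < k) #|As i|).
Proof.
move=> t_gt0 k_gt0 t_le_alpha sub cross As_max.
have [X0 X0F X0_large] := alpha_witness t_gt0 t_le_alpha.
have F_gt0 : 0 < #|F| by apply/card_gt0P; exists X0.
have ell_le : k * ell F t <= \sum_(i < k) #|As i|.
  have [G [GF Gcross G_ge]] := ell_cross_const k X0F X0_large.
  apply: leq_trans (As_max _ (fun=> GF) Gcross).
  by rewrite sum_nat_const card_ord leq_mul2l G_ge orbT.
have extremal_le (A : {set {set T}}) :
    A \subset F -> extremal_size t k F A <= \sum_(i < k) #|As i|.
  move=> AF; rewrite -sum_extremal_tuple //.
  by apply: As_max; [apply: extremal_tuple_sub | apply: extremal_tuple_cross].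
split=> [/kappa_le_natP | /(introN (kappa_le_natP _ _ _))]; rewrite mul_beta_ge1 //.
  move=> /forallP size_le; apply/anti_leq; rewrite ell_le andbT.
  apply: leq_trans (sum_cross_le sub cross) _; rewrite geq_max leqnn /=.
  by apply: (implyP (size_le _)); apply/bigcupsP => i _.
case/forallPn => A; rewrite negb_imply -ltnNge => /andP[AF lt_size].
exact: leq_trans lt_size (extremal_le A AF).
Qed.
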